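(* Work in the cube $[-1,1]^d\subset\mathbb{R}^d$ with the dual cells and shifted dual cells defined in the context. Let $z'=(z'_1,\dots,z'_d)$ have exactly $p$ entries equal to $\bullet$, and $z''$ exactly $q$ entries equal to $\bullet$. Let $I=\{i:z'_i=\bullet\}$ and $J=\{j:z''_j=\bullet\}$. Then: 1. If $I\cap J\neq\emptyset$, then $P^\vee_{z'}\cap\tilde P^\vee_{z''}(\epsilon)=\emptyset$ for every $\epsilon>0$. 2. If $I\cap J=\emptyset$ and for some $k$ one has $\{z'_k,z''_k\}=\{+,-\}$, then $\lim_{\epsilon\to0^+}P^\vee_{z'}\cap\tilde P^\vee_{z''}(\epsilon)$ has dimension lower than $d-p-q$. 3. If for some $k$ either ($z'_k=\bullet$ and $z''_k=+$) or ($z'_k=-$ and $z''_k=\bullet$), then $P^\vee_{z'}\cap\tilde P^\vee_{z''}(\epsilon)=\emptyset$ for every $\epsilon>0$. 4. Suppose $z'_k=z''_k$ whenever both lie in $\{+,-\}$. Suppose further that $z''_k=-$ for every $k$ with $z'_k=\bullet$, and $z'_k=+$ for every $k$ with $z''_k=\bullet$. Then $\lim_{\epsilon\to0^+}P^\vee_{z'}\cap\tilde P^\vee_{z''}(\epsilon)=P^\vee_z$, a $(d-p-q)$-dimensional dual cell. Here $z_k=z'_k=z''_k$ when $z'_k=z''_k\in\{+,-\}$, and $z_k=\bullet$ when $z'_k=\bullet$ or $z''_k=\bullet$.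
   Context: For $z\in\{+,-,\bullet\}^d$ with exactly $p$ entries $\bullet$, the dual cell is $$P^\vee_z=\{x\in\mathbb{R}^d: x_i=0 \text{ if } z_i=\bullet,\ x_i\in[0,1]\text{ if }z_i=+,\ x_i\in[-1,0]\text{ if }z_i=-\}.$$ It has dimension $d-p$ and is dual to the $p$-face of $[-1,1]^d$ in which the coordinates with $z_i=\bullet$ vary over $[-1,1]$ and $x_i=z_i$ (read as $\pm1$) otherwise. For $\epsilon>0$ the shifted dual cell is $$\tilde P^\vee_z(\epsilon)=[-1,1]^d\cap\Big\{\epsilon(1,1,\dots,1)+\sum_{i:z_i\neq\bullet}z_it_i\mathbf e_i:\ t_i\ge0\Big\},$$ where $z_i\in\{+,-\}$ is read as $\pm1$ and $\mathbf e_i$ are the standard unit vectors. Limits of sets as $\epsilon\to0^+$ are Hausdorff (Cauchy) limits. *)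

From HB Require Import structures.
From mathcomp Require Import all_boot all_order all_algebra.
From mathcomp Require Import reals.
Set Implicit Arguments. Unset Strict Implicit. Unset Printing Implicit Defensive.
Import Order.TTheory GRing.Theory Num.Theory.
Local Open Scope ring_scope.

Inductive sign := Plus | Minus | Bullet.

Definition is_bullet (s : sign) : bool :=
  match s with Bullet => true | _ => false end.

Definition sgnR {R : pzRingType} (s : sign) : R :=
  match s with Plus => 1 | Minus => -1 | Bullet => 0 end.

Definition nbullets (d : nat) (z : 'I_d -> sign) : nat :=
  #|[set i | is_bullet (z i)]|.

Definition dual_cell (R : realType) (d : nat) (z : 'I_d -> sign) (x : 'rV[R]_d) : Prop :=
  forall i, match z i with
            | Bullet => x 0 i == 0
            | Plus => 0 <= x 0 i <= 1
            | Minus => -1 <= x 0 i <= 0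
            end.

Definition shifted_dual_cell (R : realType) (d : nat) (z : 'I_d -> sign) (eps : R)
    (x : 'rV[R]_d) : Prop :=
  (forall i, -1 <= x 0 i <= 1) /\
  exists t : 'I_d -> R, (forall i, 0 <= t i) /\
    x = const_mx eps + \sum_(i < d | ~~ is_bullet (z i)) (sgnR (z i) * t i) *: delta_mx 0 i.

(* sup-norm distance (any norm on R^d gives the same Hausdorff convergence) *)
Definition dist (R : realType) (d : nat) (x y : 'rV[R]_d) : R :=
  \big[Num.max/0]_(i < d) `|x 0 i - y 0 i|.

Definition hausdorff_lim0 (R : realType) (d : nat) (S : R -> 'rV[R]_d -> Prop)
    (L : 'rV[R]_d -> Prop) : Prop :=
  forall e : R, 0 < e -> exists delta : R, 0 < delta /\
    forall eps : R, 0 < eps -> eps < delta ->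
      (forall x, S eps x -> exists y, L y /\ dist x y <= e) /\
      (forall y, L y -> exists x, S eps x /\ dist x y <= e).

Definition affdim_ge (R : realType) (d : nat) (S : 'rV[R]_d -> Prop) (n : nat) : Prop :=
  exists x : 'I_n.+1 -> 'rV[R]_d, (forall i, S (x i)) /\
    \rank (\matrix_(i < n) (x (lift ord0 i) - x ord0)) = n.

Definition affdim (R : realType) (d : nat) (S : 'rV[R]_d -> Prop) (k : int) : Prop :=
  (k = -1 /\ forall x, ~ S x) \/
  (exists n : nat, k = n%:Z /\ affdim_ge S n /\ ~ affdim_ge S n.+1).

Definition merge_sign (a b : sign) : sign :=
  match a, b with
  | Bullet, _ => Bullet
  | _, Bullet => Bullet
  | _, _ => a
  end.

From HB Require Import structures.
From mathcomp Require Import all_boot all_order all_algebra.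
From mathcomp Require Import reals lra zify.
Import Order.TTheory GRing.Theory Num.Theory.
Local Open Scope ring_scope.
Set Implicit Arguments. Unset Strict Implicit. Unset Printing Implicit Defensive.

(* For every eps > 0 the intersection of the dual cell of z' with the shifted
   dual cell of z'' is a box: its k-th coordinate ranges over an interval that
   depends only on the pair (z'_k, z''_k), is empty for the incompatible pairs,
   and whose endpoints move by at most eps.  Boxes whose endpoints converge,
   and which are empty or not together, converge in the Hausdorff sense to the
   limiting box.  A bullet in z' or z'', or a pair {+,-}, squeezes the k-th
   coordinate of every point near the intersection to within eps of 0, so any
   limit lies in a coordinate subspace, which bounds its affine dimension;
   under the hypotheses of 4 the limiting box is exactly the merged dual cell. *)

Local Notation bullets z := [set i | is_bullet (z i)].

Section Boxes.
Variables (R : realType) (d : nat).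
Implicit Types (a b : 'I_d -> R) (x y : 'rV[R]_d).

Definition box a b x : Prop := forall i, a i <= x 0 i <= b i.

Lemma distC x y : dist x y = dist y x.
Proof. by apply: eq_bigr => i _; rewrite distrC. Qed.

Lemma dist_le x y (e : R) : 0 <= e -> (forall i, `|x 0 i - y 0 i| <= e) -> dist x y <= e.
Proof.
move=> he hxy; apply: (big_ind (fun v => v <= e)) => // u v hu hv.
by rewrite ge_max hu hv.
Qed.

Lemma coord_le_dist x y i : `|x 0 i - y 0 i| <= dist x y.
Proof. by rewrite /dist (bigD1 i) //= le_max lexx. Qed.

Lemma eq_hausdorff_lim0 (S : R -> 'rV[R]_d -> Prop) (L L' : 'rV[R]_d -> Prop) :
  (forall y, L y <-> L' y) -> hausdorff_lim0 S L -> hausdorff_lim0 S L'.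
Proof.
move=> LL' hL e he; have [delta [hdelta hS]] := hL e he.
exists delta; split => // eps he0 hed; have [hSL hLS] := hS eps he0 hed.
split=> [x /hSL [y [/LL' hy hxy]] | y /LL' /hLS //]; by exists y.
Qed.

Definition clamp (a b v : R) : R := if v < a then a else if b < v then b else v.

Lemma clamp_itv (a b v : R) : a <= b -> a <= clamp a b v <= b.
Proof. by rewrite /clamp => hab; do 2?case: ltP => ?; apply/andP; split; lra. Qed.

Lemma dist_clamp (a b a' b' v e : R) : a <= v <= b -> a' <= b' ->
  `|a - a'| <= e -> `|b - b'| <= e -> `|v - clamp a' b' v| <= e.
Proof.
rewrite !ler_norml /clamp => /andP[? ?] ? /andP[? ?] /andP[? ?].
by do 2?case: ltP => ?; apply/andP; split; lra.
Qed.

Lemma box_approx a b a' b' x (e : R) : 0 <= e -> box a b x ->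
  (forall i, a i <= b i -> a' i <= b' i) ->
  (forall i, `|a i - a' i| <= e /\ `|b i - b' i| <= e) ->
  exists y, box a' b' y /\ dist x y <= e.
Proof.
move=> he hx hne hnear.
have hne' i : a' i <= b' i by apply: hne; have /andP[? ?] := hx i; lra.
exists (\row_i clamp (a' i) (b' i) (x 0 i)); split=> [i|].
  by rewrite mxE clamp_itv.
apply: dist_le => // i; rewrite mxE; have [? ?] := hnear i.
exact: dist_clamp.
Qed.

Lemma hausdorff_lim0_box (S : R -> 'rV[R]_d -> Prop) (a b : R -> 'I_d -> R) :
  (forall eps x, 0 < eps <= 1 -> S eps x <-> box (a eps) (b eps) x) ->
  (forall eps i, 0 < eps <= 1 -> `|a eps i - a 0 i| <= eps /\ `|b eps i - b 0 i| <= eps) ->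
  (forall eps i, 0 < eps <= 1 -> (a eps i <= b eps i) = (a 0 i <= b 0 i)) ->
  hausdorff_lim0 S (box (a 0) (b 0)).
Proof.
move=> hS hnear hne e he; exists (Num.min e 1); split; first by rewrite lt_min he ltr01.
move=> eps he0; rewrite lt_min => /andP[hee he1].
have heps : 0 < eps <= 1 by apply/andP; split; lra.
have heps_e : eps <= e by lra.
split=> [x /(hS _ _ heps) hx | y hy].
  have [y [hy hxy]] : exists y, box (a 0) (b 0) y /\ dist x y <= eps.
    by apply: box_approx (ltW he0) hx _ (hnear eps ^~ heps) => i; rewrite hne.
  by exists y; split=> //; apply: le_trans heps_e.
have [x [hx hxy]] : exists x, box (a eps) (b eps) x /\ dist y x <= eps.
  apply: box_approx (ltW he0) hy _ _ => i; first by rewrite hne.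
  by rewrite distrC [`|b _ _ - _|]distrC; apply: hnear.
by exists x; split; [apply/hS | rewrite distC; apply: le_trans heps_e].
Qed.

End Boxes.

Section Coordinates.
Variable R : realType.
Implicit Types (s : sign) (eps v : R).

Definition dual_coord s v : bool :=
  match s with Bullet => v == 0 | Plus => 0 <= v <= 1 | Minus => -1 <= v <= 0 end.

Definition shifted_coord s eps v : bool :=
  (-1 <= v <= 1) && match s with Bullet => v == eps | Plus => eps <= v | Minus => v <= eps end.

(* Endpoints of the coordinate range of the intersection; the pairs that never
   meet for [eps > 0] get the empty interval [1, -1]. *)
Definition meet_lo (s' s'' : sign) eps : R :=
  match s', s'' with
  | Bullet, Minus | Plus, Minus => 0
  | Plus, Bullet | Plus, Plus => eps
  | Minus, Minus => -1
  | _, _ => 1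
  end.

Definition meet_hi (s' s'' : sign) eps : R :=
  match s', s'' with
  | Bullet, Minus | Minus, Minus => 0
  | Plus, Bullet | Plus, Minus => eps
  | Plus, Plus => 1
  | _, _ => -1
  end.

Lemma meet_itvP s' s'' eps v : 0 < eps -> dual_coord s' v -> shifted_coord s'' eps v ->
  meet_lo s' s'' eps <= v <= meet_hi s' s'' eps.
Proof.
move=> he; case: s' s'' => [] [] /= h1 /andP[/andP[? ?] h2]; rewrite ?(eqP h1) ?(eqP h2);
  try case/andP: h1 => ? ?; apply/andP; split; lra.
Qed.

Lemma meet_itvW s' s'' eps v : 0 < eps <= 1 -> meet_lo s' s'' eps <= v <= meet_hi s' s'' eps ->
  dual_coord s' v && shifted_coord s'' eps v.
Proof.
case/andP=> ? ?; case: s' s'' => [] [] /= /andP[? ?];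
  rewrite ?eq_le; repeat (apply/andP; split); lra.
Qed.

Lemma meet_lo_near s' s'' eps : 0 <= eps -> `|meet_lo s' s'' eps - meet_lo s' s'' 0| <= eps.
Proof. by case: s' s'' => [] [] /= he; rewrite ?subrr ?subr0 ?normr0 ?ger0_norm. Qed.

Lemma meet_hi_near s' s'' eps : 0 <= eps -> `|meet_hi s' s'' eps - meet_hi s' s'' 0| <= eps.
Proof. by case: s' s'' => [] [] /= he; rewrite ?subrr ?subr0 ?normr0 ?ger0_norm. Qed.

Lemma meet_itv_nonempty s' s'' eps : 0 < eps <= 1 ->
  (meet_lo s' s'' eps <= meet_hi s' s'' eps) = (meet_lo s' s'' 0 <= meet_hi s' s'' 0).
Proof. by case/andP=> ? ?; case: s' s'' => [] [] /=; apply/idP/idP => ?; lra. Qed.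

Lemma meet_itv_empty s' s'' eps :
  meet_hi s' s'' 0 < meet_lo s' s'' 0 -> meet_hi s' s'' eps < meet_lo s' s'' eps.
Proof. by case: s' s'' => [] [] /=; lra. Qed.

Lemma meet_itv_degenerate s' s'' :
  s' = Bullet \/ s' <> s'' -> meet_hi s' s'' 0 <= meet_lo s' s'' 0.
Proof. by case: s' s'' => [] [] [] //=; lra. Qed.

Lemma meet_itv_small s' s'' eps v : meet_hi s' s'' 0 <= meet_lo s' s'' 0 -> 0 <= eps ->
  meet_lo s' s'' eps <= v <= meet_hi s' s'' eps -> `|v| <= eps.
Proof. by rewrite ler_norml; case: s' s'' => [] [] /= ? ? /andP[? ?]; apply/andP; split; lra. Qed.

Lemma meet_itv0E s' s'' v :
  (s' <> Bullet -> s'' <> Bullet -> s' = s'') -> (s' = Bullet -> s'' = Minus) ->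
  (s'' = Bullet -> s' = Plus) ->
  (meet_lo s' s'' 0 <= v <= meet_hi s' s'' 0) = dual_coord (merge_sign s' s'') v.
Proof.
case: s' s'' => [] [] //= h1 h2 h3; try by rewrite eq_le andbC.
all: first [by case: (h1 _ _) | by have := h2 erefl | by have := h3 erefl].
Qed.

Lemma dual_coord0 s : dual_coord s (0 : R).
Proof. by case: s; rewrite /= ?lexx ?ler01 ?lerN10. Qed.

Lemma dual_coord_sgnR s : ~~ is_bullet s -> dual_coord s (sgnR s : R).
Proof. by case: s => //= _; rewrite ?lexx ?ler01 ?lerN10. Qed.

Lemma sgnR_sqr s : ~~ is_bullet s -> sgnR s * sgnR s = 1 :> R.
Proof. by case: s => //= _; rewrite ?mulrNN mulr1. Qed.

End Coordinates.

Section CellMeet.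
Variables (R : realType) (d : nat).
Implicit Types (z : 'I_d -> sign) (eps : R) (x y : 'rV[R]_d).

Lemma shifted_sum_coord z eps (t : 'I_d -> R) i :
  (const_mx eps + \sum_(j < d | ~~ is_bullet (z j)) (sgnR (z j) * t j) *: delta_mx 0 j
    : 'rV[R]_d) 0 i = eps + (if is_bullet (z i) then 0 else sgnR (z i) * t i).
Proof.
rewrite !mxE summxE; under eq_bigr => j _ do rewrite !mxE eqxx /=.
case: ifP => hi.
  rewrite big1 ?addr0 // => j hj.
  by case: eqP => [ji | _]; [rewrite -ji hi in hj | rewrite mulr0].
rewrite (bigD1 i) ?hi //= eqxx mulr1 big1 ?addr0 // => j /andP[_ hj].
by case: eqP => [ji | _]; [rewrite ji eqxx in hj | rewrite mulr0].
Qed.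

Lemma shifted_dual_cellE z eps x :
  shifted_dual_cell z eps x <-> forall i, shifted_coord (z i) eps (x 0 i).
Proof.
split=> [[hcube [t [ht hx]]] i | hx].
  rewrite /shifted_coord hcube hx shifted_sum_coord /=; have := ht i.
  by case: (z i) => /= ?; rewrite ?addr0 ?eqxx //; lra.
split=> [i | ]; first by have /andP[] := hx i.
exists (fun i => sgnR (z i) * (x 0 i - eps)); split=> [i | ].
  by have /andP[_] := hx i; case: (z i) => /= ?; lra.
apply/rowP => i; rewrite shifted_sum_coord; have /andP[_] := hx i.
by case: (z i) => /= [_ | _ | /eqP ->]; lra.
Qed.

Definition cell_meet z' z'' eps x : Prop := dual_cell z' x /\ shifted_dual_cell z'' eps x.

Definition meet_box z' z'' eps : 'rV[R]_d -> Prop :=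
  box (fun i => meet_lo (z' i) (z'' i) eps) (fun i => meet_hi (z' i) (z'' i) eps).

Lemma cell_meet_box z' z'' eps x : 0 < eps -> cell_meet z' z'' eps x -> meet_box z' z'' eps x.
Proof. by move=> he [hx /shifted_dual_cellE hs] i; exact: meet_itvP he (hx i) (hs i). Qed.

Lemma cell_meet_boxE z' z'' eps x :
  0 < eps <= 1 -> cell_meet z' z'' eps x <-> meet_box z' z'' eps x.
Proof.
move=> he; split; first by apply: cell_meet_box; case/andP: he.
by move=> hx; split=> [i | ]; [ | apply/shifted_dual_cellE => i]; case/andP: (meet_itvW he (hx i)).
Qed.

Lemma cell_meet_empty z' z'' k eps x :
  meet_hi (z' k) (z'' k) (0 : R) < meet_lo (z' k) (z'' k) 0 -> 0 < eps ->
  ~ cell_meet z' z'' eps x.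
Proof. by move=> /(meet_itv_empty eps) ? he /(cell_meet_box he)/(_ k)/andP[? ?]; lra. Qed.

Lemma hausdorff_lim0_cell_meet z' z'' : hausdorff_lim0 (cell_meet z' z'') (meet_box z' z'' 0).
Proof.
apply: (@hausdorff_lim0_box _ _ _ (fun eps i => meet_lo (z' i) (z'' i) eps)
                                  (fun eps i => meet_hi (z' i) (z'' i) eps)).
- by move=> eps x; apply: cell_meet_boxE.
- by move=> eps i /andP[/ltW he _]; rewrite meet_lo_near ?meet_hi_near.
- by move=> eps i; apply: meet_itv_nonempty.
Qed.

Lemma hausdorff_lim0_coord0 (S : R -> 'rV[R]_d -> Prop) L i : hausdorff_lim0 S L ->
  (forall eps x, 0 < eps -> S eps x -> `|x 0 i| <= eps) -> forall y, L y -> y 0 i = 0.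
Proof.
move=> hL hS y hy; apply/eqP/negP => /negP hy0.
have hy_pos : 0 < `|y 0 i| by rewrite normr_gt0.
pose e := `|y 0 i| / 4.
have he : 0 < e by rewrite divr_gt0.
have [delta [hdelta hlim]] := hL e he.
pose eps := Num.min e (delta / 2).
have heps : 0 < eps by rewrite lt_min he divr_gt0.
have eps_e : eps <= e by rewrite ge_min lexx.
have eps_delta : eps < delta by rewrite gt_min; apply/orP; right; lra.
have [x [hx hxy]] := (hlim eps heps eps_delta).2 y hy.
have := ler_distD (x 0 i) (y 0 i) 0; rewrite !subr0 distrC.
have := hS _ _ heps hx; have := le_trans (coord_le_dist x y i) hxy.
by rewrite /e in eps_e *; lra.
Qed.

Lemma cell_meet_limit_coord0 z' z'' L i : hausdorff_lim0 (cell_meet z' z'') L ->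
  z' i = Bullet \/ z' i <> z'' i -> forall y, L y -> y 0 i = 0.
Proof.
move=> hL hi; apply: (hausdorff_lim0_coord0 hL) => eps x he hx.
apply: meet_itv_small (ltW he) (cell_meet_box he hx i).
exact: meet_itv_degenerate.
Qed.
End CellMeet.

Section AffineDimension.
Variables (R : realType) (d : nat).
Implicit Types (z : 'I_d -> sign) (S : 'rV[R]_d -> Prop) (K : {set 'I_d}).

Lemma rank_vanishing_cols n (M : 'M[R]_(n, d)) K :
  (forall r i, i \in K -> M r i = 0) -> (\rank M <= d - #|K|)%N.
Proof.
move=> hM; pose g : 'I_#|~: K| -> 'I_d := enum_val.
have -> : M = colsub g M *m rowsub g 1%:M.
  apply/matrixP => r i; rewrite !mxE; under eq_bigr do rewrite !mxE.
  rewrite -(big_enum_val (fun j => M r j * (j == i)%:R)).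
  case: (boolP (i \in ~: K)) => hi.
    rewrite (bigD1 i) //= eqxx mulr1 big1 ?addr0 // => j /andP[_ /negbTE ->].
    by rewrite mulr0.
  rewrite big1 => [|j hj]; first by move: hi; rewrite inE negbK => /hM ->.
  by case: eqP => [ji | _]; [move: hi; rewrite -ji hj | rewrite mulr0].
by apply: leq_trans (mulmx_max_rank _ _) _; rewrite cardsCs setCK card_ord.
Qed.

Lemma affdim_ge_vanishing S K n :
  (forall y, S y -> forall i, i \in K -> y 0 i = 0) -> affdim_ge S n -> (n <= d - #|K|)%N.
Proof.
move=> hS [x [hx <-]]; apply: rank_vanishing_cols => r i hi.
by rewrite !mxE !(hS _ (hx _) i hi) subrr.
Qed.

Lemma affdim_le_vanishing S K (m : int) :
  (forall y, S y -> forall i, i \in K -> y 0 i = 0) -> affdim S m -> m <= d%:Z - #|K|%:Z.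
Proof.
have : (#|K| <= d)%N by rewrite -[X in (_ <= X)%N]card_ord max_card.
by move=> hK hS [[-> _] | [n [-> [/(affdim_ge_vanishing hS) hn _]]]]; lia.
Qed.

Lemma affdim_ge_dual_cell z : affdim_ge (dual_cell (R := R) z) (d - nbullets z).
Proof.
set C := ~: bullets z.
have -> : (d - nbullets z)%N = #|C| by rewrite cardsCs setCK card_ord.
pose g : 'I_#|C| -> 'I_d := enum_val.
have hg j : ~~ is_bullet (z (g j)) by have := enum_valP j; rewrite !inE.
pose v j : 'rV[R]_d := sgnR (z (g j)) *: delta_mx 0 (g j).
have vE j k : v j 0 k = sgnR (z (g j)) * (k == g j)%:R by rewrite !mxE eqxx.
exists (fun i => if unlift ord0 i is Some j then v j else 0); split.
  move=> i k; case: (unlift ord0 i) => [j|]; last by rewrite mxE; exact: dual_coord0.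
  rewrite vE; case: eqP => [-> | _]; first by rewrite mulr1; exact: dual_coord_sgnR.
  by rewrite mulr0; exact: dual_coord0.
set M := \matrix_(i < #|C|) _.
have ME j k : M j k = v j 0 k.
  by rewrite !mxE liftK unlift_none /= !mxE subr0.
have MMt : M *m M^T = 1%:M.
  apply/matrixP => j j'; rewrite !mxE; under eq_bigr do rewrite [M^T _ _]mxE !ME !vE.
  rewrite (bigD1 (g j)) //= eqxx mulr1 big1 ?addr0 => [|k /negbTE ->]; last by rewrite mulr0 mul0r.
  rewrite (inj_eq enum_val_inj); case: eqP => [<- | _]; last by rewrite !mulr0.
  by rewrite mulr1 sgnR_sqr.
apply/eqP; rewrite eqn_leq rank_leq_row /=.
by rewrite -{1}(mxrank1 R #|C|) -MMt mxrankM_maxl.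
Qed.

Lemma dual_cell_bullet z (y : 'rV[R]_d) :
  dual_cell z y -> forall i, i \in bullets z -> y 0 i = 0.
Proof. by move=> hy i; move: (hy i); rewrite inE; case: (z i) => //= /eqP. Qed.

Lemma affdim_dual_cell z : affdim (dual_cell (R := R) z) (d%:Z - (nbullets z)%:Z).
Proof.
have hz : (nbullets z <= d)%N by rewrite -[X in (_ <= X)%N]card_ord max_card.
right; exists (d - nbullets z)%N; split; first by rewrite subzn.
split; first exact: affdim_ge_dual_cell.
move/(affdim_ge_vanishing (@dual_cell_bullet z)).
by rewrite /nbullets ltnn.
Qed.
End AffineDimension.

Lemma bullets_merge d (z' z'' : 'I_d -> sign) :
  bullets (fun k => merge_sign (z' k) (z'' k)) = bullets z' :|: bullets z''.
Proof. by apply/setP => i; rewrite !inE; case: (z' i) (z'' i) => [] []. Qed.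

Lemma card_bulletsU d (z' z'' : 'I_d -> sign) :
  (forall k, ~ (z' k = Bullet /\ z'' k = Bullet)) ->
  #|bullets z' :|: bullets z''| = (nbullets z' + nbullets z'')%N.
Proof.
move=> disj; rewrite cardsU; suff -> : bullets z' :&: bullets z'' = set0 by rewrite cards0 subn0.
apply/setP => i; rewrite !inE; move: (disj i).
by case: (z' i) (z'' i) => [] [] // [].
Qed.

Theorem proposition6 (R : realType) (d p q : nat) (z' z'' : 'I_d -> sign)
  (hp : nbullets z' = p) (hq : nbullets z'' = q) :
  let S := fun (eps : R) (x : 'rV[R]_d) =>
             dual_cell z' x /\ shifted_dual_cell z'' eps x in
  (* 1 *)
  ((exists k, z' k = Bullet /\ z'' k = Bullet) ->
     forall eps : R, 0 < eps -> forall x, ~ S eps x) /\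
  (* 2 *)
  ((forall k, ~ (z' k = Bullet /\ z'' k = Bullet)) ->
   (exists k, (z' k = Plus /\ z'' k = Minus) \/ (z' k = Minus /\ z'' k = Plus)) ->
     (exists L, hausdorff_lim0 S L) /\
     (forall L, hausdorff_lim0 S L -> forall k : int, affdim L k ->
        k < d%:Z - p%:Z - q%:Z)) /\
  (* 3 *)
  ((exists k, (z' k = Bullet /\ z'' k = Plus) \/ (z' k = Minus /\ z'' k = Bullet)) ->
     forall eps : R, 0 < eps -> forall x, ~ S eps x) /\
  (* 4 *)
  ((forall k, z' k <> Bullet -> z'' k <> Bullet -> z' k = z'' k) ->
   (forall k, z' k = Bullet -> z'' k = Minus) ->
   (forall k, z'' k = Bullet -> z' k = Plus) ->
     hausdorff_lim0 S (dual_cell (fun k => merge_sign (z' k) (z'' k))) /\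
     affdim (dual_cell (R:=R) (fun k => merge_sign (z' k) (z'' k))) (d%:Z - p%:Z - q%:Z)).
Proof.
move=> S; have hlim : hausdorff_lim0 S (meet_box z' z'' 0) := hausdorff_lim0_cell_meet z' z''.
split.
  move=> [k [h' h'']] eps he x; apply: (cell_meet_empty (k := k)) he.
  by rewrite h' h'' /=; lra.
split.
  move=> disj [k hk]; split=> [|L hL m]; first by exists (meet_box z' z'' 0).
  set K := k |: (bullets z' :|: bullets z'').
  have cardK : #|K| = (p + q).+1.
    by rewrite cardsU1 card_bulletsU // hp hq !inE; case: hk => -[-> ->].
  have vanish y : L y -> forall i, i \in K -> y 0 i = 0.
    move=> hy i; rewrite !inE => hi; apply: (cell_meet_limit_coord0 hL) hy.
    move: hi => /predU1P[-> | ]; first by right; case: hk => -[-> ->].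
    by case: (z' i) (z'' i) => [] [] //; by [left | right].
  by move/(affdim_le_vanishing vanish); rewrite cardK; lia.
split.
  move=> [k hk] eps he x; apply: (cell_meet_empty (k := k)) he.
  by case: hk => -[-> ->] /=; lra.
move=> hsame h' h''.
have disj k : ~ (z' k = Bullet /\ z'' k = Bullet) by move=> [/h' ->].
split.
  apply: eq_hausdorff_lim0 hlim => y.
  have hmerge i := meet_itv0E (y 0 i) (hsame i) (h' i) (h'' i).
  split=> hy i; first by move: (hy i); rewrite /= hmerge.
  by rewrite /= hmerge; exact: hy i.
have := affdim_dual_cell R (fun k => merge_sign (z' k) (z'' k)).
by rewrite /nbullets bullets_merge card_bulletsU // hp hq PoszD opprD addrA.
Qed.
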